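(* A power series $\varphi(x)=\sum_{i\ge0}\gamma_ix^i\in\mathbb{K}[[x]]$ is an element of $\mathcal{F}_1$ if and only if $$\sum_{i=0}^m(-1)^i\binom{2m-1}{m-i}\binom{m+i}{i}\gamma_{m+i-1}=0$$ for each $m\ge1$.
   Context: $\mathbb{K}\in\{\mathbb{Q},\mathbb{R},\mathbb{C}\}$. $\mathcal{F}_1$ denotes the space of $\varphi\in\mathbb{K}[[x]]$ with $\varphi(x/(x-1))=(1-x)\varphi(x)$. *)

From mathcomp Require Import all_boot all_order all_algebra.
Set Implicit Arguments. Unset Strict Implicit. Unset Printing Implicit Defensive.
Import Order.TTheory GRing.Theory Num.Theory.
Local Open Scope ring_scope.

Definition fps (K : nzRingType) := nat -> K.

Definition fone (K : nzRingType) : fps K := fun n => if n == 0%N then 1 else 0.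
Definition fX (K : nzRingType) : fps K := fun n => if n == 1%N then 1 else 0.

Definition fsub (K : nzRingType) (f g : fps K) : fps K := fun n => f n - g n.

Definition fmul (K : nzRingType) (f g : fps K) : fps K :=
  fun n => \sum_(i < n.+1) f i * g (n - i)%N.

Definition fpow (K : nzRingType) (f : fps K) (k : nat) : fps K :=
  iter k (fmul f) (fone K).

(* Composition phi(psi(x)), meaningful when psi 0 = 0 (then psi^i has
   order >= i, so only i <= n contribute to the coefficient of x^n). *)
Definition fcomp (K : nzRingType) (phi psi : fps K) : fps K :=
  fun n => \sum_(i < n.+1) phi i * fpow psi i n.

(* The series x/(x-1) = -x/(1-x) = - sum_{n>=1} x^n. *)
Definition x_over_xm1 (K : nzRingType) : fps K :=
  fun n => if n == 0%N then 0 else -1.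

Definition in_F1 (K : nzRingType) (phi : fps K) : Prop :=
  fcomp phi (x_over_xm1 K) = fmul (fsub (fone K) (fX K)) phi.

(** Let [L] be the linear functional [x^i |-> gamma_i] on [K[x]], and put
    [u = x], [v = 1 - x], [S(a,b) = u^a v^b - u^b v^a].  The coefficient of
    [x^(n+1)] in [(x/(x-1))^(k+1)] is [(-1)^(k+1) C(n,k)], so the coefficient
    of [x^(n+1)] in [phi(x/(x-1)) - (1-x) phi(x)] is [L(S(n,1))]: [phi] lies in
    [F_1] iff [L] kills every [S(a,1)].  As [u + v = 1], the recursions
    [S(a,b+2) = S(a,b+1) - S(a+1,b+1)] and
    [u^(j+2) - v^(j+2) = (u^(j+1) - v^(j+1)) - uv (u^j - v^j)] show that the
    [S(a,1)] and the diagonal [S(k,k+1) = (uv)^k (1 - 2x)] span the same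
    space.  Finally [C(2m-1,m) L(S(m-1,m))] is the alternating sum of the
    statement, and [C(2m-1,m) <> 0] in characteristic zero. *)

From HB Require Import structures.
From mathcomp Require Import all_boot all_order all_algebra.
From mathcomp Require Import ring zify.
From Stdlib Require Import FunctionalExtensionality.
Set Implicit Arguments. Unset Strict Implicit. Unset Printing Implicit Defensive.
Import Order.TTheory GRing.Theory Num.Theory.

Lemma bin_fact_add m n : 'C(m + n, m) * (m`! * n`!) = (m + n)`!.
Proof.
by have := @bin_fact (m + n) m; rewrite addKn; apply; apply: leq_addr.
Qed.

Lemma bin_trinomial a b c :
  'C(a + b + c, a) * 'C(b + c, b) = 'C(a + b + c, c) * 'C(a + b, b).
Proof.
apply/eqP; rewrite -(@eqn_pmul2r (a`! * b`! * c`!)) ?muln_gt0 ?fact_gt0 //.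
have -> : 'C(a + b + c, a) * 'C(b + c, b) * (a`! * b`! * c`!)
          = 'C(a + (b + c), a) * (a`! * ('C(b + c, b) * (b`! * c`!))).
  by rewrite addnA; ring.
have -> : 'C(a + b + c, c) * 'C(a + b, b) * (a`! * b`! * c`!)
          = 'C(c + (a + b), c) * (c`! * ('C(b + a, b) * (b`! * a`!))).
  by rewrite [a + b + c]addnC [b + a]addnC; ring.
by rewrite !bin_fact_add [b + a]addnC bin_fact_add addnA [c + _]addnC.
Qed.

Lemma bin_skew_diag n k : k <= n ->
  'C((2 * n).+1, n - k) * 'C((n + k).+2, k.+1)
  = 'C((2 * n).+1, n.+1) * ('C(n, k.+1) + 2 * 'C(n, k)).
Proof.
move=> le_kn; apply/eqP; rewrite -(@eqn_pmul2l k.+1) //; apply/eqP.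
have trinomial : 'C((2 * n).+1, n - k) * 'C((n + k).+1, k)
                 = 'C((2 * n).+1, n.+1) * 'C(n, k).
  have := bin_trinomial (n - k) k n.+1.
  have -> : (n - k + k + n.+1 = (2 * n).+1)%N by lia.
  by rewrite subnK // addnS [k + n]addnC.
rewrite [X in X = _]mulnCA -mul_bin_diag mulnCA trinomial.
rewrite [X in _ = X]mulnCA mulnDr mul_bin_left; nia.
Qed.

Local Open Scope ring_scope.

Section Moment.
Variables (R : nzRingType) (gamma : nat -> R).

Definition moment (P : {poly R}) : R := \sum_(i < size P) P`_i * gamma i.

Lemma momentE (P : {poly R}) N :
  (size P <= N)%N -> moment P = \sum_(i < N) P`_i * gamma i.
Proof.
move=> le_PN; rewrite /moment -(subnKC le_PN) big_split_ord /=.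
rewrite [X in _ + X]big1 ?addr0 // => i _.
by rewrite nth_default ?mul0r // leq_addr.
Qed.

Lemma moment_is_zmod_morphism : zmod_morphism moment.
Proof.
move=> P Q; pose N := maxn (size P) (size Q).
have le_PQ : (size (P - Q)%R <= N)%N.
  by rewrite (leq_trans (size_polyD _ _)) ?size_polyN.
rewrite (momentE le_PQ) (momentE (leq_maxl (size P) (size Q))).
rewrite (momentE (leq_maxr (size P) (size Q))) -sumrB.
by apply: eq_bigr => i _; rewrite coefB mulrBl.
Qed.

HB.instance Definition _ :=
  GRing.isZmodMorphism.Build {poly R} R moment moment_is_zmod_morphism.

Lemma moment_Xn m : moment 'X^m = gamma m.
Proof.
rewrite /moment size_polyXn big_ord_recr /= coefXn eqxx mul1r.
rewrite big1 ?add0r // => i _.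
by rewrite coefXn (ltn_eqF (ltn_ord i)) mul0r.
Qed.

Lemma moment_XnM n (P : {poly R}) N : (size P <= N)%N ->
  moment ('X^n * P) = \sum_(i < N) P`_i * gamma (n + i)%N.
Proof.
move=> le_PN; have le_XnP : (size ('X^n * P)%R <= n + N)%N.
  apply/leq_sizeP => j le_j; rewrite coefXnM; case: ifP => // _.
  rewrite nth_default // (leq_trans le_PN) // leq_subRL //.
  by rewrite (leq_trans _ le_j) ?leq_addr.
rewrite (momentE le_XnP) big_split_ord /= big1 ?add0r => [|i _].
  by apply: eq_bigr => i _; rewrite coefXnM ltnNge leq_addr /= addKn.
by rewrite coefXnM ltn_ord mul0r.
Qed.

End Moment.

Section Skew.
Variable R : comNzRingType.

Definition skew a b : {poly R} := 'X^a * (1 - 'X) ^+ b - 'X^b * (1 - 'X) ^+ a.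

Definition pow_diff j : {poly R} := 'X^j - (1 - 'X) ^+ j.

Local Notation w := ('X * (1 - 'X) : {poly R}).

Lemma skewSr a b : skew a b.+2 = skew a b.+1 - skew a.+1 b.+1.
Proof. by rewrite /skew !exprS; ring. Qed.

Lemma pow_diffSS j : pow_diff j.+2 = pow_diff j.+1 - w * pow_diff j.
Proof. by rewrite /pow_diff !exprS; ring. Qed.

Lemma skew_diag_pow_diff a : skew a a.+1 = - (w ^+ a * pow_diff 1).
Proof. by rewrite /skew /pow_diff exprMn !exprS !expr0; ring. Qed.

Lemma skew01 : skew 0 1 = - pow_diff 1.
Proof. by rewrite /skew /pow_diff !expr0 !expr1; ring. Qed.

Lemma skewS1 a : skew a.+1 1 = w * pow_diff a.
Proof. by rewrite /skew /pow_diff !exprS !expr0; ring. Qed.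

Variables (V : zmodType) (f : {additive {poly R} -> V}).

Lemma skew1_kernel_skew : (forall a, f (skew a 1) = 0) ->
  forall b a, f (skew a b.+1) = 0.
Proof.
move=> f_skew1; elim=> [|b IHb] a; first exact: f_skew1.
by rewrite skewSr raddfB !IHb subrr.
Qed.

Lemma skew_diag_kernel_pow_diff : (forall k, f (skew k k.+1) = 0) ->
  forall j a, f (w ^+ a * pow_diff j) = 0.
Proof.
move=> f_diag; suff IH j : (forall a, f (w ^+ a * pow_diff j) = 0)
                         /\ (forall a, f (w ^+ a * pow_diff j.+1) = 0).
  by move=> j a; case: (IH j).
elim: j => [|j [IHj IHj1]].
  split=> a; first by rewrite /pow_diff !expr0 subrr mulr0 raddf0.
  by apply/eqP; rewrite -oppr_eq0 -raddfN -skew_diag_pow_diff f_diag.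
split=> // a; rewrite pow_diffSS mulrBr mulrA -exprSr raddfB.
by rewrite IHj1 IHj subrr.
Qed.

Lemma skew1_kernel_diag :
  (forall a, f (skew a 1) = 0) <-> (forall k, f (skew k k.+1) = 0).
Proof.
split=> [f_skew1 k | f_diag [|a]]; first exact: skew1_kernel_skew.
  rewrite skew01 raddfN -[pow_diff 1]mul1r -(expr0 w).
  by rewrite skew_diag_kernel_pow_diff ?oppr0.
by rewrite skewS1 -[w]expr1 skew_diag_kernel_pow_diff.
Qed.

End Skew.

Lemma sum_bin_lt k n : (\sum_(t < n) 'C(t, k) = 'C(n, k.+1))%N.
Proof.
elim: n => [|n IHn]; first by rewrite big_ord0 bin0n.
by rewrite big_ord_recr /= IHn binS.
Qed.

Section PowersOfXOverXm1.
Variable R : nzRingType.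

Local Notation psi := (x_over_xm1 R).

Lemma fpow_x_over_xm1S i n : fpow psi i.+1 n = - \sum_(t < n) fpow psi i t.
Proof.
rewrite /fpow iterS /fmul big_ord_recl /= mul0r add0r.
rewrite -sumrN (reindex_inj rev_ord_inj) /=; apply: eq_bigr => -[t lt_tn] _ /=.
by rewrite mulN1r /bump leq0n add1n; congr (- iter _ _ _ _); lia.
Qed.

Lemma fpow_x_over_xm1S0 i : fpow psi i.+1 0 = 0.
Proof. by rewrite fpow_x_over_xm1S big_ord0 oppr0. Qed.

Lemma coef_fpow_x_over_xm1 k n :
  fpow psi k.+1 n.+1 = (-1) ^+ k.+1 * 'C(n, k)%:R.
Proof.
elim: k n => [|k IHk] n.
  rewrite fpow_x_over_xm1S big_ord_recl big1 ?addr0 => [|i _] //.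
  by rewrite bin0 expr1 mulr1.
rewrite fpow_x_over_xm1S big_ord_recl fpow_x_over_xm1S0 add0r.
under eq_bigr => i _ do rewrite IHk.
by rewrite -mulr_sumr -natr_sum sum_bin_lt (exprS _ k.+1) mulN1r mulNr.
Qed.

End PowersOfXOverXm1.

Section InF1.
Variables (R : comNzRingType) (gamma : nat -> R).

Local Notation psi := (x_over_xm1 R).
Local Notation one_sub_x := (fsub (fone R) (fX R)).

Lemma coef_1subX_exp n j : ((1 - 'X) ^+ n)`_j = (-1) ^+ j * 'C(n, j)%:R :> R.
Proof.
elim: n j => [|n IHn] j.
  by rewrite expr0 coef1 bin0n; case: j => [|j] /=; rewrite ?mulr1 ?mulr0.
rewrite exprS mulrBl mul1r coefB coefXM IHn; case: j => [|j] /=.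
  by rewrite !bin0 subr0.
by rewrite IHn binS natrD exprS; ring.
Qed.

Lemma fcomp_x_over_xm1 n :
  fcomp gamma psi n.+1 = moment gamma (- ('X * (1 - 'X) ^+ n)).
Proof.
have le_size : (size (- ('X * (1 - 'X) ^+ n) : {poly R}) <= n.+2)%N.
  apply/leq_sizeP => -[//|j] lt_nj.
  by rewrite coefN coefXM coef_1subX_exp bin_small ?mulr0 ?oppr0.
rewrite (momentE _ le_size) /fcomp; apply: eq_bigr => -[[|k] lt_kn] _ /=.
  by rewrite coefN coefXM /= oppr0 mul0r mulr0.
rewrite -[fmul psi _]/(fpow psi k.+1) coef_fpow_x_over_xm1 coefN coefXM /=.
by rewrite coef_1subX_exp exprS; ring.
Qed.

Lemma fmul_1subX n : fmul one_sub_x gamma n.+1 = gamma n.+1 - gamma n.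
Proof.
rewrite /fmul !big_ord_recl big1 => [|i _]; last first.
  by rewrite /fsub /fone /fX /= subrr mul0r.
by rewrite /fsub /fone /fX /= subr0 sub0r subn0 subSS subn0 addr0 mul1r mulN1r.
Qed.

Lemma in_F1_defect n :
  fcomp gamma psi n.+1 - fmul one_sub_x gamma n.+1 = moment gamma (skew R n 1).
Proof.
rewrite fcomp_x_over_xm1 fmul_1subX.
rewrite -(moment_Xn gamma n.+1) -(moment_Xn gamma n).
by rewrite -!raddfB /skew !exprS !expr0; congr moment; ring.
Qed.

Lemma in_F1_skew1 : in_F1 gamma <-> forall a, moment gamma (skew R a 1) = 0.
Proof.
split=> [F1_gamma a | skew1_0].
  by rewrite -in_F1_defect -[fcomp _ _]/(fcomp gamma psi) F1_gamma subrr.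
apply: functional_extensionality => -[|n].
  rewrite /fcomp /fmul !big_ord_recl !big_ord0 /fsub /fone /fX /=.
  by rewrite !addr0 subr0 mulr1 mul1r.
by apply/eqP; rewrite -subr_eq0 in_F1_defect skew1_0.
Qed.

End InF1.

Section DiagonalSkew.
Variables (R : comNzRingType) (gamma : nat -> R).

Definition skew_diag_cofactor n : {poly R} :=
  (1 - 'X) ^+ n - ((1 - 'X) ^+ n * 'X) *+ 2.

Lemma skew_diagE n : skew R n n.+1 = 'X^n * skew_diag_cofactor n.
Proof. by rewrite /skew /skew_diag_cofactor !exprS mulr2n; ring. Qed.

Lemma coef_skew_diag_cofactor0 n : (skew_diag_cofactor n)`_0 = 1.
Proof.
rewrite coefB coefMn coefMX /= coef_1subX_exp.
by rewrite bin0 expr0 mulr1 mul0rn subr0.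
Qed.

Lemma coef_skew_diag_cofactorS n k : (skew_diag_cofactor n)`_k.+1
  = (-1) ^+ k.+1 * ('C(n, k.+1)%:R + 2 * 'C(n, k)%:R).
Proof.
by rewrite coefB coefMn coefMX /= !coef_1subX_exp mulr2n exprS; ring.
Qed.

Lemma size_skew_diag_cofactor n : (size (skew_diag_cofactor n) <= n.+2)%N.
Proof.
apply/leq_sizeP => -[//|k] lt_nk; rewrite coef_skew_diag_cofactorS.
by rewrite !bin_small ?mulr0 ?addr0 ?mulr0 // ltnW.
Qed.

Lemma moment_skew_diag n :
  \sum_(i < n.+2) (-1) ^+ i * ('C(2 * n.+1 - 1, n.+1 - i))%:R
    * ('C(n.+1 + i, i))%:R * gamma (n.+1 + i - 1)%N
  = 'C((2 * n).+1, n.+1)%:R * moment gamma (skew R n n.+1).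
Proof.
have -> : (2 * n.+1 - 1 = (2 * n).+1)%N by lia.
rewrite skew_diagE (moment_XnM _ _ (size_skew_diag_cofactor n)) mulr_sumr.
apply: eq_bigr => -[[|k] lt_kn] _ /=.
  by rewrite coef_skew_diag_cofactor0 subn0 bin0 2!addn0 subn1 /=; ring.
have le_kn : (k <= n)%N by rewrite -ltnS -ltnS.
have -> : (n.+1 + k.+1 - 1 = n + k.+1)%N by lia.
have -> : (n.+1 + k.+1 = (n + k).+2)%N by lia.
rewrite subSS coef_skew_diag_cofactorS.
transitivity ((-1) ^+ k.+1
  * ('C((2 * n).+1, n - k) * 'C((n + k).+2, k.+1))%N%:R * gamma (n + k.+1)).
  by rewrite natrM; ring.
by rewrite bin_skew_diag // natrM (natrD _ 'C(n, k.+1)) natrM; ring.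
Qed.

End DiagonalSkew.

Theorem lemma4p4 (K : numFieldType) (gamma : nat -> K) :
  in_F1 gamma <->
  (forall m : nat, (1 <= m)%N ->
     \sum_(i < m.+1)
        (-1) ^+ i * ('C(2 * m - 1, m - i))%:R * ('C(m + i, i))%:R
          * gamma (m + i - 1)%N = 0).
Proof.
rewrite in_F1_skew1 (skew1_kernel_diag (moment gamma)).
split=> [diag0 [//|n] _ | sum0 k]; first by rewrite moment_skew_diag diag0 mulr0.
have C_gt0 : (0 < 'C((2 * k).+1, k.+1))%N by rewrite bin_gt0; lia.
move/eqP: (sum0 k.+1 isT); rewrite moment_skew_diag mulf_eq0 pnatr_eq0.
by rewrite eqn0Ngt C_gt0 => /eqP.
Qed.
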